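(* Let $L\in\mathbb{R}^{k\times k}$ be any task loss matrix with nonnegative entries, let $\Phi_{quad}(f,y)=\frac{1}{2k}\|f+L(:,y)\|_2^2$ be its quadratic surrogate, and let $\mathcal{F}\subseteq\mathbb{R}^k$ be a subspace containing the column space of $L$. Then for all $\varepsilon\ge0$, $$H_{\Phi_{quad},L,\mathcal{F}}(\varepsilon)\ \ge\ \frac{\varepsilon^2}{2k\max_{i\ne j}\|P_{\mathcal{F}}\Delta_{ij}\|_2^2}\ \ge\ \frac{\varepsilon^2}{4k},$$ where $P_{\mathcal{F}}$ is the orthogonal projection onto $\mathcal{F}$, $\Delta_{ij}=e_i-e_j$, and $e_c$ is the $c$-th standard basis vector of $\mathbb{R}^k$.
   Context: Labels are $\{1,\dots,k\}$; $L(:,y)$ denotes the $y$-th column of $L$. $\mathrm{pred}(f)$ is the smallest index maximizing $f_c$. For $q\in\Delta_k$ (probability simplex): $\ell(f,q)=\sum_c q_cL(\mathrm{pred}(f),c)$, $\phi(f,q)=\sum_c q_c\Phi(f,c)$, $\delta\ell(f,q)=\ell(f,q)-\inf_{\hat f\in\mathcal{F}}\ell(\hat f,q)$, $\delta\phi(f,q)=\phi(f,q)-\inf_{\hat f\in\mathcal{F}}\phi(\hat f,q)$. Calibration function: $H_{\Phi,L,\mathcal{F}}(\varepsilon)=\inf\{\delta\phi(f,q):f\in\mathcal{F},q\in\Delta_k,\delta\ell(f,q)\ge\varepsilon\}$, $+\infty$ if the feasible set is empty. Convention $1/0=+\infty$. *)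

From HB Require Import structures.
From mathcomp Require Import all_boot all_order all_algebra.
From mathcomp Require Import all_classical all_reals ereal.
Set Implicit Arguments. Unset Strict Implicit. Unset Printing Implicit Defensive.
Import Order.TTheory GRing.Theory Num.Theory.
Local Open Scope classical_set_scope.
Local Open Scope ring_scope.

Section Defs.
Variable R : realType.
Variable k : nat.

Definition sqnorm (v : 'rV[R]_k) : R := \sum_(i < k) v 0 i ^+ 2.

Definition Delta (i j : 'I_k) : 'rV[R]_k := delta_mx 0 i - delta_mx 0 j.

(* matrix of the orthogonal projection onto the row space of F
   (acting on row vectors by right multiplication): B^T (B B^T)^{-1} B
   with B a basis (row_base) of F. *)
Definition projmx (F : 'M[R]_k) : 'M[R]_k :=
  let B := row_base F in (B^T *m invmx (B *m B^T)) *m B.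

Definition projF (F : 'M[R]_k) (v : 'rV[R]_k) : 'rV[R]_k := v *m projmx F.

(* pred(f): smallest index maximizing f_c (None only when k = 0) *)
Definition predf (f : 'rV[R]_k) : option 'I_k :=
  [pick i | [forall j : 'I_k, f 0 j <= f 0 i] &&
            [forall j : 'I_k, ((j < i)%N) ==> (f 0 j < f 0 i)]].

Definition lossAt (L : 'M[R]_k) (f : 'rV[R]_k) (c : 'I_k) : R :=
  if predf f is Some i then L i c else 0.

Definition simplex (q : 'rV[R]_k) : Prop :=
  (forall c, 0 <= q 0 c) /\ \sum_(c < k) q 0 c = 1.

Definition ell (L : 'M[R]_k) (f q : 'rV[R]_k) : R :=
  \sum_(c < k) q 0 c * lossAt L f c.

Definition Phi_quad (L : 'M[R]_k) (f : 'rV[R]_k) (y : 'I_k) : R :=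
  (2 * k%:R)^-1 * sqnorm (f + (col y L)^T).

Definition phi (L : 'M[R]_k) (f q : 'rV[R]_k) : R :=
  \sum_(c < k) q 0 c * Phi_quad L f c.

Definition inF (F : 'M[R]_k) (f : 'rV[R]_k) : Prop := (f <= F)%MS.

Definition dell (F L : 'M[R]_k) (f q : 'rV[R]_k) : R :=
  ell L f q - inf [set ell L g q | g in inF F].

Definition dphi (F L : 'M[R]_k) (f q : 'rV[R]_k) : R :=
  phi L f q - inf [set phi L g q | g in inF F].

(* calibration function; ereal_inf of the empty set is +oo *)
Definition Hcal (F L : 'M[R]_k) (eps : R) : \bar R :=
  ereal_inf [set x : \bar R | exists f q, inF F f /\ simplex q /\
                eps <= dell F L f q /\ x = (dphi F L f q)%:E].

Definition maxProjDelta (F : 'M[R]_k) : R :=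
  \big[Num.max/0]_(ij : 'I_k * 'I_k | ij.1 != ij.2)
     sqnorm (projF F (Delta ij.1 ij.2)).

End Defs.

Definition invE {R : realType} (x : R) : \bar R :=
  if x == 0 then +oo%E else (x^-1)%:E.

From HB Require Import structures.
From mathcomp Require Import all_boot all_order all_algebra.
From mathcomp Require Import all_classical all_reals ereal.
From mathcomp Require Import lra ring.
Set Implicit Arguments. Unset Strict Implicit. Unset Printing Implicit Defensive.
Import Order.TTheory GRing.Theory Num.Theory.
Local Open Scope ring_scope.

(* Write Lq := q *m L^T for the vector of conditional task losses (Lq)_i = sum_c q_c L(i,c).
   The quadratic surrogate splits as phi(g,q) = phi(-Lq,q) + ||g + Lq||^2 / (2k), and -Lq lies
   in F, so the surrogate excess of f is at least ||u||^2 / (2k) with u = f + Lq in F.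
   If the task excess of f is at least eps, then with i = pred f and j a minimiser of Lq,
   eps <= Lq_i - Lq_j <= u_i - u_j = <u, Delta_ij> = <u, P_F Delta_ij> since u is in F, and
   Cauchy-Schwarz gives eps^2 <= ||u||^2 max ||P_F Delta_ij||^2.  The second inequality is
   ||P_F Delta_ij||^2 <= ||Delta_ij||^2 = 2. *)

Section CauchySchwarz.
Variables (R : realDomainType) (I : finType).

Lemma sum_sqr_eq0 (a : I -> R) : \sum_i a i ^+ 2 = 0 -> forall i, a i = 0.
Proof.
move=> a0 i; apply/eqP; rewrite -sqrf_eq0; apply/eqP.
by apply: (psumr_eq0P _ a0) => // j _; exact: sqr_ge0.
Qed.

Lemma cauchy_schwarz_sum (a b : I -> R) :
  (\sum_i a i * b i) ^+ 2 <= (\sum_i a i ^+ 2) * (\sum_i b i ^+ 2).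
Proof.
set A := \sum_i a i ^+ 2; set B := \sum_i b i ^+ 2; set D := \sum_i a i * b i.
have [B0 | B_neq0] := eqVneq B 0.
  have -> : D = 0 by rewrite /D big1 // => i _; rewrite (sum_sqr_eq0 B0) mulr0.
  by rewrite B0 expr0n mulr0.
have B_gt0 : 0 < B by rewrite lt0r B_neq0 sumr_ge0 // => i _; exact: sqr_ge0.
have : 0 <= \sum_i (B * a i - D * b i) ^+ 2 by apply: sumr_ge0 => i _; exact: sqr_ge0.
have -> : \sum_i (B * a i - D * b i) ^+ 2 = B * (B * A - D ^+ 2).
  transitivity (\sum_i (B ^+ 2 * a i ^+ 2 - 2 * B * D * (a i * b i) + D ^+ 2 * b i ^+ 2)).
    by apply: eq_bigr => i _; ring.
  by rewrite big_split sumrB /= -!mulr_sumr -/A -/B -/D; ring.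
by rewrite pmulr_rge0 // subr_ge0 mulrC.
Qed.

End CauchySchwarz.

Section OrthogonalProjection.
Variables (R : realType) (k : nat).
Implicit Types (u v w : 'rV[R]_k) (F : 'M[R]_k).

Lemma dot_mxE m (u w : 'rV[R]_m) : (u *m w^T) 0 0 = \sum_l u 0 l * w 0 l.
Proof. by rewrite mxE; apply: eq_bigr => l _; rewrite mxE. Qed.

Lemma sqnormE v : sqnorm v = (v *m v^T) 0 0.
Proof. by rewrite dot_mxE; apply: eq_bigr => l _; rewrite expr2. Qed.

Lemma sqnorm_ge0 v : 0 <= sqnorm v.
Proof. by apply: sumr_ge0 => i _; exact: sqr_ge0. Qed.

Lemma cauchy_schwarz_row u w : ((u *m w^T) 0 0) ^+ 2 <= sqnorm u * sqnorm w.
Proof. by rewrite dot_mxE; exact: cauchy_schwarz_sum. Qed.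

Lemma row_base_gram_unit F : row_base F *m (row_base F)^T \in unitmx.
Proof.
set B := row_base F; rewrite -row_free_unit; apply/inj_row_free => v vBBt0.
have /sum_sqr_eq0 vB0 : sqnorm (v *m B) = 0.
  by rewrite sqnormE trmx_mul mulmxA -(mulmxA v) vBBt0 mul0mx mxE.
apply: (row_free_inj (row_base_free F)); rewrite mul0mx.
by apply/rowP => i; rewrite vB0 mxE.
Qed.

Lemma projmx_sym F : (projmx F)^T = projmx F.
Proof.
rewrite /projmx /=; move: (row_base F) => B.
by rewrite !trmx_mul trmxK trmx_inv trmx_mul trmxK mulmxA.
Qed.

Lemma projmx_fix F u : (u <= F)%MS -> u *m projmx F = u.
Proof.
move=> uF; have /submxP[D ->] : (u <= row_base F)%MS by rewrite eq_row_base.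
rewrite /projmx /=; move: (row_base F) (row_base_gram_unit F) => B BBt_unit.
by rewrite !mulmxA -(mulmxA D) -(mulmxA D) mulmxV ?mulmx1.
Qed.

Lemma projmx_idem F : projmx F *m projmx F = projmx F.
Proof.
apply/row_matrixP => i; rewrite row_mul projmx_fix //.
by rewrite (submx_trans (row_sub _ _)) // (submx_trans (submxMl _ _)) ?eq_row_base.
Qed.

Lemma sqnorm_orthoproj P v : P^T = P -> P *m P = P ->
  sqnorm v = sqnorm (v *m P) + sqnorm (v - v *m P).
Proof.
move=> P_sym P_idem; rewrite !sqnormE.
suff -> : v *m v^T = v *m P *m (v *m P)^T + (v - v *m P) *m (v - v *m P)^T.
  by rewrite [in LHS]mxE.
rewrite linearB /= !trmx_mul P_sym mulmxBl !mulmxBr !mulmxA -(mulmxA v P P) P_idem.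
by rewrite subrr subr0 addrC subrK.
Qed.

Lemma sqnorm_projF_le F v : sqnorm (projF F v) <= sqnorm v.
Proof.
rewrite [leRHS](sqnorm_orthoproj v (projmx_sym F) (projmx_idem F)) lerDl.
exact: sqnorm_ge0.
Qed.

Lemma dot_projF F u w : (u <= F)%MS -> (u *m (projF F w)^T) 0 0 = (u *m w^T) 0 0.
Proof. by move=> uF; rewrite /projF trmx_mul projmx_sym mulmxA projmx_fix. Qed.

Lemma dot_Delta u (i j : 'I_k) : (u *m (Delta R i j)^T) 0 0 = u 0 i - u 0 j.
Proof. by rewrite /Delta linearB /= mulmxBr !trmx_delta -!colE !mxE. Qed.

Lemma sqnorm_Delta (i j : 'I_k) : i != j -> sqnorm (Delta R i j) = 2.
Proof.
move=> ij; rewrite sqnormE dot_Delta !mxE !eqxx (negbTE ij) eq_sym (negbTE ij) /=.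
by rewrite subr0 sub0r opprK.
Qed.

Lemma sqr_le_sqnorm_projF_Delta F u (i j : 'I_k) (eps : R) : (u <= F)%MS -> 0 <= eps ->
  eps <= u 0 i - u 0 j -> eps ^+ 2 <= sqnorm u * sqnorm (projF F (Delta R i j)).
Proof.
move=> uF eps_ge0 gap; apply: le_trans (cauchy_schwarz_row _ _).
by rewrite dot_projF // dot_Delta !expr2; apply: ler_pM.
Qed.

Lemma le_maxProjDelta F (i j : 'I_k) :
  i != j -> sqnorm (projF F (Delta R i j)) <= maxProjDelta F.
Proof. by move=> ij; rewrite /maxProjDelta (bigD1 (i, j)) //= le_max lexx. Qed.

Lemma maxProjDelta_ge0 F : 0 <= maxProjDelta F.
Proof. exact: bigmax_ge_id. Qed.

Lemma maxProjDelta_le2 F : maxProjDelta F <= 2.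
Proof.
apply: bigmax_le => // -[i j] /= ij.
by rewrite -(sqnorm_Delta ij); exact: sqnorm_projF_le.
Qed.

End OrthogonalProjection.

Section Calibration.
Variables (R : realType) (k : nat).
Hypothesis k_gt0 : (0 < k)%N.
Variables (L F : 'M[R]_k).
Hypothesis colL_sub : forall y : 'I_k, ((col y L)^T <= F)%MS.
Implicit Types (f g q : 'rV[R]_k).

(* The least maximiser satisfies the [pick] predicate, so [predf f] is never [None]. *)
Lemma predf_argmax f : exists2 i, predf f = Some i & forall j, f 0 j <= f 0 i.
Proof.
rewrite /predf; case: pickP => [i /andP[/forallP f_max _] | no_pick]; first by exists i.
pose maxf := [pred i : 'I_k | [forall j, f 0 j <= f 0 i]].
have [m _ m_max] := @arg_maxP _ R _ (Ordinal k_gt0) predT (fun i => f 0 i) isT.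
have maxf_m : maxf m by rewrite inE; apply/forallP => j; exact: m_max.
have [a /[dup] maxf_a /forallP a_max a_min] := arg_minnP (fun i : 'I_k => val i) maxf_m.
case/negP: (no_pick a); rewrite [X in X && _]maxf_a; apply/forallP => j; apply/implyP => ja.
rewrite lt_def a_max andbT; apply: contraTneq ja => fja.
rewrite -leqNgt; apply: a_min; rewrite inE; apply/forallP => l; rewrite -fja; exact: a_max.
Qed.

Lemma mul_trL_sub q : (q *m L^T <= F)%MS.
Proof.
apply: submx_trans (submxMl _ _) _; apply/row_subP => c.
by rewrite -tr_col colL_sub.
Qed.

Lemma mul_trLE q i : (q *m L^T) 0 i = \sum_c q 0 c * L i c.
Proof. by rewrite mxE; apply: eq_bigr => c _; rewrite mxE. Qed.

Lemma ell_predf f q i : predf f = Some i -> ell L f q = (q *m L^T) 0 i.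
Proof. by move=> fi; rewrite /ell /lossAt fi mul_trLE. Qed.

Lemma dell_le_gap f q eps : eps <= dell F L f q ->
  exists i j, (forall l, f 0 l <= f 0 i) /\ eps <= (q *m L^T) 0 i - (q *m L^T) 0 j.
Proof.
have [i fi f_max] := predf_argmax f.
have [j _ Lq_min] := predf_argmax (- (q *m L^T)).
have ell_ge : (q *m L^T) 0 j <= inf [set ell L g q | g in inF F].
  apply: lb_le_inf; first by exists (ell L 0 q), 0 => //; exact: sub0mx.
  move=> _ [g _ <-]; have [l gl _] := predf_argmax g.
  by move: (Lq_min l); rewrite (ell_predf _ gl) mxE [leRHS]mxE lerN2.
rewrite /dell (ell_predf _ fi) => gap; exists i, j; split=> //; lra.
Qed.

Lemma phi_excess g q : \sum_c q 0 c = 1 ->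
  phi L g q - phi L (- (q *m L^T)) q = (2 * k%:R)^-1 * sqnorm (g + q *m L^T).
Proof.
move=> q1; rewrite /phi -sumrB.
transitivity (\sum_c (2 * k%:R)^-1 * (\sum_i q 0 c *
   ((g 0 i + L i c) ^+ 2 - (L i c - (q *m L^T) 0 i) ^+ 2))).
  apply: eq_bigr => c _; rewrite /Phi_quad /sqnorm -!mulrBr -sumrB.
  rewrite mulrCA mulr_sumr; congr (_ * _); apply: eq_bigr => i _.
  by rewrite !mxE [- _ + _]addrC.
rewrite -mulr_sumr exchange_big /=; congr (_ * _); apply: eq_bigr => i _.
transitivity (\sum_c (q 0 c * (g 0 i ^+ 2 - (q *m L^T) 0 i ^+ 2)
                      + 2 * (g 0 i + (q *m L^T) 0 i) * (q 0 c * L i c))).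
  by apply: eq_bigr => c _; ring.
by rewrite big_split /= -mulr_suml -mulr_sumr q1 -mul_trLE [in RHS]mxE; ring.
Qed.

Lemma dphi_ge f q : simplex q ->
  (2 * k%:R)^-1 * sqnorm (f + q *m L^T) <= dphi F L f q.
Proof.
case=> q_ge0 q1.
have inf_le : inf [set phi L g q | g in inF F] <= phi L (- (q *m L^T)) q.
  apply: ge_inf; last by exists (- (q *m L^T)) => //; rewrite /inF eqmx_opp mul_trL_sub.
  exists 0 => _ [g _ <-]; apply: sumr_ge0 => c _; apply: mulr_ge0 => //.
  by rewrite /Phi_quad mulr_ge0 ?sqnorm_ge0 // invr_ge0 mulr_ge0 ?ler0n.
by rewrite /dphi -(phi_excess f q1); lra.
Qed.

Lemma sqr_le_sqnorm_maxProjDelta f q eps : inF F f -> 0 < eps ->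
  eps <= dell F L f q -> eps ^+ 2 <= sqnorm (f + q *m L^T) * maxProjDelta F.
Proof.
move=> fF eps_gt0 /dell_le_gap[i [j [f_max gap]]].
set u := f + q *m L^T.
have gap_u : eps <= u 0 i - u 0 j by rewrite [u 0 i]mxE [u 0 j]mxE; have := f_max j; lra.
have ij : i != j by apply: contraTneq gap_u => ->; rewrite subrr -ltNge.
have uF : (u <= F)%MS by rewrite addmx_sub ?mul_trL_sub.
apply: le_trans (sqr_le_sqnorm_projF_Delta uF (ltW eps_gt0) gap_u) _.
by rewrite ler_wpM2l ?sqnorm_ge0 ?le_maxProjDelta.
Qed.

Lemma Hcal_ge eps : 0 <= eps ->
  ((eps ^+ 2)%:E * invE (2 * k%:R * maxProjDelta F) <= Hcal F L eps)%E.
Proof.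
move=> eps_ge0; apply: le_ereal_inf_tmp => _ [f [q [fF [qS [gap ->]]]]].
have k_pos : 0 < k%:R :> R by rewrite ltr0n.
have dphi_ge0 : 0 <= dphi F L f q.
  apply: le_trans (dphi_ge f qS).
  by rewrite mulr_ge0 ?sqnorm_ge0 // invr_ge0 mulr_ge0 ?ler0n.
have [-> | eps_neq0] := eqVneq eps 0; first by rewrite expr0n mul0e lee_fin.
have eps_gt0 : 0 < eps by rewrite lt0r eps_neq0.
have sqr_le := sqr_le_sqnorm_maxProjDelta fF eps_gt0 gap.
have M_gt0 : 0 < maxProjDelta F.
  rewrite lt0r maxProjDelta_ge0 andbT; apply: contraTneq sqr_le => ->.
  by rewrite mulr0 -ltNge exprn_gt0.
rewrite /invE gt_eqF ?mulr_gt0 // -EFinM lee_fin; apply: le_trans (dphi_ge f qS).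
by rewrite invfM mulrCA ler_pM2l ?invr_gt0 ?mulr_gt0 // ler_pdivrMr.
Qed.

Lemma div4k_le_mul_invE (a : R) : 0 <= a ->
  ((a / (4 * k%:R))%:E <= a%:E * invE (2 * k%:R * maxProjDelta F))%E.
Proof.
move=> a_ge0; have k_pos : 0 < k%:R :> R by rewrite ltr0n.
rewrite /invE; have [_ | c_neq0] := eqVneq (2 * k%:R * maxProjDelta F) 0.
  have [-> | a_neq0] := eqVneq a 0; first by rewrite mul0r mul0e.
  by rewrite gt0_muley ?leey // lte_fin lt0r a_neq0.
have M_gt0 : 0 < maxProjDelta F.
  by rewrite lt0r maxProjDelta_ge0 andbT; apply: contraNneq c_neq0 => ->; rewrite mulr0.
rewrite -EFinM lee_fin ler_wpM2l // lef_pV2 ?posrE ?mulr_gt0 //.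
by have := maxProjDelta_le2 F; nra.
Qed.

End Calibration.

Theorem theorem7 (R : realType) (k : nat) (hk : (1 < k)%N)
  (L : 'M[R]_k) (hL : forall i j, 0 <= L i j)
  (F : 'M[R]_k) (hF : forall y : 'I_k, ((col y L)^T <= F)%MS)
  (eps : R) (heps : 0 <= eps) :
  ((eps ^+ 2)%:E * invE (2 * k%:R * maxProjDelta F) <= Hcal F L eps)%E /\
  ((eps ^+ 2 / (4 * k%:R))%:E <= (eps ^+ 2)%:E * invE (2 * k%:R * maxProjDelta F))%E.
Proof.
have k_gt0 : (0 < k)%N := ltnW hk.
split; first exact: Hcal_ge.
exact: div4k_le_mul_invE (exprn_ge0 2 heps).
Qed.
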